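(* Let $S=(s_{ij})$ and $C=(c_{ij})$ be real symmetric $n\times n$ matrices with spectra (counted with multiplicities) $\sigma(S)=(\lambda_1,\ldots,\lambda_n)$ and $\sigma(C)=(\mu_1,\ldots,\mu_n)$, let $0\le\gamma\le1$, and suppose $|c_{ij}|\le s_{ij}$ for all $1\le i,j\le n$. Then $\tfrac12(S+\gamma C)$ and $\tfrac12(S-\gamma C)$ are symmetric nonnegative matrices, and the $2n\times 2n$ block matrices $M_{\pm\gamma}=(M_{ij,\pm\gamma})_{i,j=1}^n$ with $$M_{ij,\pm\gamma}=\begin{pmatrix}\frac{s_{ij}\pm\gamma c_{ij}}{2} & \frac{s_{ij}\mp\gamma c_{ij}}{2}\\ \frac{s_{ij}\mp\gamma c_{ij}}{2} & \frac{s_{ij}\pm\gamma c_{ij}}{2}\end{pmatrix}$$ are symmetric nonnegative matrices realizing, respectively, the lists $(\lambda_1,\ldots,\lambda_n,\pm\gamma\mu_1,\ldots,\pm\gamma\mu_n)$ (with $+$ for $M_{+\gamma}$ and $-$ for $M_{-\gamma}$).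
   Context: A matrix realizes a list of complex numbers if the list is its spectrum counted with multiplicities. Nonnegative means entrywise nonnegative. *)

From HB Require Import structures.
From mathcomp Require Import all_boot all_order all_algebra.
From mathcomp Require Import reals.
Set Implicit Arguments. Unset Strict Implicit. Unset Printing Implicit Defensive.
Import Order.TTheory GRing.Theory Num.Theory.
Local Open Scope ring_scope.

Definition is_symmetric (R : nzRingType) (n : nat) (A : 'M[R]_n) : Prop := A^T = A.

Definition nonnegmx (R : numDomainType) (m n : nat) (A : 'M[R]_(m, n)) : Prop :=
  forall i j, 0 <= A i j.

(* A realizes the list l: l is the spectrum of A counted with (algebraic)
   multiplicities, i.e. the characteristic polynomial of A splits as the
   product of ('X - x) over x in l. *)
Definition realizes (R : comNzRingType) (n : nat) (A : 'M[R]_n) (l : seq R) : Prop :=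
  char_poly A = \prod_(x <- l) ('X - x%:P).

(* Block index: row/column p of the 2n x 2n matrix lies in block p %/ 2,
   at position p %% 2 inside the 2x2 block. *)
Lemma blk_proof (n : nat) (p : 'I_(n * 2)) : (p %/ 2 < n)%N.
Proof. by rewrite ltn_divLR. Qed.

Definition blk (n : nat) (p : 'I_(n * 2)) : 'I_n := Ordinal (blk_proof p).

(* M_{+gamma} = blockM S C gamma, M_{-gamma} = blockM S C (- gamma). *)
Definition blockM (R : fieldType) (n : nat) (S C : 'M[R]_n) (g : R) : 'M[R]_(n * 2) :=
  \matrix_(p, q)
    (if (p %% 2 == q %% 2)%N
     then (S (blk p) (blk q) + g * C (blk p) (blk q)) / 2
     else (S (blk p) (blk q) - g * C (blk p) (blk q)) / 2).

From HB Require Import structures.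
From mathcomp Require Import all_boot all_order all_algebra.
From mathcomp Require Import reals zify ring.
Set Implicit Arguments. Unset Strict Implicit. Unset Printing Implicit Defensive.
Import Order.TTheory GRing.Theory Num.Theory.
Local Open Scope ring_scope.

(* Let Q_+ and Q_- be the 2n x n matrices whose j-th columns are e_2j + e_2j+1
   and e_2j - e_2j+1.  Each 2x2 block of M_g has the eigenvectors (1, 1) and
   (1, -1), so M_g Q_+ = Q_+ S and M_g Q_- = Q_- (g C); since [Q_+ Q_-] has
   Gram matrix 2 I it is invertible, and M_g is similar to diag(S, g C).
   Every entry of M_{+-g} is an entry of (S + g C)/2 or of (S - g C)/2, which
   are nonnegative because |g c_ij| <= s_ij. *)

Section BlockIndex.
Variable n : nat.

Fact blk_lo_proof (j : 'I_n) : (j * 2 < n * 2)%N.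
Proof. have := ltn_ord j; lia. Qed.
Fact blk_hi_proof (j : 'I_n) : (j * 2 + 1 < n * 2)%N.
Proof. have := ltn_ord j; lia. Qed.

Definition blk_lo (j : 'I_n) : 'I_(n * 2) := Ordinal (blk_lo_proof j).
Definition blk_hi (j : 'I_n) : 'I_(n * 2) := Ordinal (blk_hi_proof j).

Lemma blk_loK j : blk (blk_lo j) = j.
Proof. by apply: val_inj => /=; lia. Qed.
Lemma blk_hiK j : blk (blk_hi j) = j.
Proof. by apply: val_inj => /=; lia. Qed.
Lemma blk_lo_mod2 j : (blk_lo j %% 2 = 0)%N.
Proof. by rewrite /=; lia. Qed.
Lemma blk_hi_mod2 j : (blk_hi j %% 2 = 1)%N.
Proof. by rewrite /=; lia. Qed.

Lemma blk_eq_cases (p : 'I_(n * 2)) j : blk p = j -> p = blk_lo j \/ p = blk_hi j.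
Proof.
move=> /(congr1 val) /= pj.
have /orP[/eqP lo | /eqP hi] : (p == j * 2 :> nat)%N || (p == j * 2 + 1 :> nat)%N by lia.
  by left; apply: val_inj.
by right; apply: val_inj.
Qed.

Lemma sum_blk (R : pzSemiRingType) (j : 'I_n) (F : 'I_(n * 2) -> R) :
  \sum_q (blk q == j)%:R * F q = F (blk_lo j) + F (blk_hi j).
Proof.
rewrite (bigD1 (blk_lo j)) //= (bigD1 (blk_hi j)) /=; last first.
  by apply/eqP => /(congr1 val) /=; lia.
rewrite blk_loK blk_hiK eqxx !mul1r big1 ?addr0 // => q /andP[lo hi].
case: eqP => [/blk_eq_cases[] qj | _]; last by rewrite mul0r.
  by rewrite qj eqxx in lo.
by rewrite qj eqxx in hi.
Qed.

End BlockIndex.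

Section PairMatrix.
Variables (R : fieldType) (n : nat).

Definition pair_mx (s : R) : 'M[R]_(n * 2, n) :=
  \matrix_(p, j) ((blk p == j)%:R * s ^+ (p %% 2)).

Lemma mul_pair_mx m (A : 'M[R]_(m, n * 2)) s i j :
  (A *m pair_mx s) i j = A i (blk_lo j) + s * A i (blk_hi j).
Proof.
rewrite mxE; under eq_bigr => q _ do rewrite mxE mulrCA.
by rewrite sum_blk blk_lo_mod2 blk_hi_mod2 mulr1 mulrC.
Qed.

Lemma pair_mx_mul m (A : 'M[R]_(n, m)) s p j :
  (pair_mx s *m A) p j = s ^+ (p %% 2) * A (blk p) j.
Proof.
rewrite mxE; under eq_bigr => i _ do rewrite mxE (mulrC _ (s ^+ _)) -mulrA.
rewrite -mulr_sumr (bigD1 (blk p)) //= eqxx mul1r big1 ?addr0 // => i /negPf.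
by rewrite eq_sym => ->; rewrite mul0r.
Qed.

Lemma tr_pair_mx_mul s t : (pair_mx s)^T *m pair_mx t = (1 + s * t)%:M.
Proof.
apply/matrixP => i j; rewrite mul_pair_mx !mxE blk_loK blk_hiK.
rewrite blk_lo_mod2 blk_hi_mod2 eq_sym.
by case: (i == j); rewrite /= ?mulr1n ?mulr0n; ring.
Qed.

Variables (S C : 'M[R]_n) (g : R).
Hypothesis two_neq0 : (2 : R) != 0.

Lemma blockM_mul_pair_mx1 : blockM S C g *m pair_mx 1 = pair_mx 1 *m S.
Proof.
apply/matrixP => p j.
rewrite mul_pair_mx pair_mx_mul !mxE blk_loK blk_hiK blk_lo_mod2 blk_hi_mod2.
by rewrite modn2; case: (odd p) => /=; field.
Qed.

Lemma blockM_mul_pair_mxN1 : blockM S C g *m pair_mx (-1) = pair_mx (-1) *m (g *: C).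
Proof.
apply/matrixP => p j.
rewrite mul_pair_mx pair_mx_mul !mxE blk_loK blk_hiK blk_lo_mod2 blk_hi_mod2.
by rewrite modn2; case: (odd p) => /=; field.
Qed.

End PairMatrix.

Lemma char_poly_intertwine (R : fieldType) m m' (A : 'M[R]_m) (B : 'M[R]_m')
    (P : 'M[R]_(m, m')) :
  m = m' -> P^T *m P \in unitmx -> A *m P = P *m B -> char_poly A = char_poly B.
Proof.
move=> eq_mm'; subst m'; rewrite unitmx_mul => /andP[_ P_unit] AP_PB.
have PcA_cBP : char_poly_mx A *m map_mx polyC P = map_mx polyC P *m char_poly_mx B.
  by rewrite /char_poly_mx mulmxBl mulmxBr -!map_mxM AP_PB scalar_mxC.
have := congr1 determinant PcA_cBP; rewrite !det_mulmx det_map_mx [X in _ = X]mulrC.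
by apply: mulIf; rewrite polyC_eq0 -unitfE -unitmxE.
Qed.

Lemma char_poly_block_diag (R : comNzRingType) m1 m2 (A : 'M[R]_m1) (D : 'M[R]_m2) :
  char_poly (block_mx A 0 0 D) = char_poly A * char_poly D.
Proof.
rewrite /char_poly /char_poly_mx map_block_mx !raddf0 scalar_mx_block.
by rewrite opp_block_mx add_block_mx !oppr0 !addr0 det_ublock.
Qed.

Lemma char_poly0 (R : comNzRingType) n : char_poly (0 : 'M[R]_n) = 'X ^+ n.
Proof.
rewrite char_poly_trig; last by apply/is_trig_mxP => i j _; rewrite mxE.
under eq_bigr => i _ do rewrite mxE subr0.
by rewrite prodr_const card_ord.
Qed.

Lemma char_poly_scale (R : fieldType) n (C : 'M[R]_n) g (s : seq R) :
  char_poly C = \prod_(x <- s) ('X - x%:P) ->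
  char_poly (g *: C) = \prod_(x <- s) ('X - (g * x)%:P).
Proof.
move=> cpC; have size_s : size s = n.
  by have := size_char_poly C; rewrite cpC size_prod_XsubC => -[].
have [->|g_neq0] := eqVneq g 0.
  under eq_bigr => x _ do rewrite mul0r polyC0 subr0.
  by rewrite scale0r char_poly0 big_const_seq count_predT iter_mulr_1 size_s.
pose q : {poly R} := g^-1%:P * 'X.
have gXsubC c : g%:P * (q - c%:P) = 'X - (g * c)%:P.
  by rewrite mulrBr /q mulrA -polyCM mulfV // mul1r polyCM.
have cp_gC : char_poly (g *: C) = g%:P ^+ n * (char_poly C \Po q).
  rewrite /char_poly -det_map_mx -det_scalar -det_mulmx; congr determinant.
  apply/matrixP => i j; rewrite mul_scalar_mx !mxE.
  rewrite rmorphB /= rmorphMn /= comp_polyX comp_polyC.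
  by case: (i == j); rewrite ?mulr1n ?gXsubC // !mulr0n !sub0r mulrN polyCM.
rewrite cp_gC cpC rmorph_prod -size_s -(count_predT s) -iter_mulr_1.
rewrite -(big_const_seq 1 *%R) -big_split /=; apply: eq_bigr => x _.
by rewrite rmorphB /= comp_polyX comp_polyC gXsubC.
Qed.

Lemma blockM_char_poly (R : fieldType) n (S C : 'M[R]_n) g : (2 : R) != 0 ->
  char_poly (blockM S C g) = char_poly S * char_poly (g *: C).
Proof.
move=> two_neq0; rewrite -char_poly_block_diag.
pose P := row_mx (pair_mx n (1 : R)) (pair_mx n (-1)).
have gramP : P^T *m P = 2%:M.
  rewrite tr_row_mx mul_col_row !tr_pair_mx_mul !mulr1 !mulrN1 opprK !subrr.
  by rewrite (raddf0 (@scalar_mx R n)) -scalar_mx_block.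
apply: (char_poly_intertwine (P := P)); first by lia.
  by rewrite gramP unitmxE det_scalar unitrX // unitfE.
rewrite mul_mx_row mul_row_block !mulmx0 addr0 add0r.
by rewrite blockM_mul_pair_mx1 // blockM_mul_pair_mxN1.
Qed.

Lemma blockME (R : fieldType) n (S C : 'M[R]_n) g p q :
  blockM S C g p q =
  (2^-1 *: (S + (if (p %% 2 == q %% 2)%N then g else - g) *: C)) (blk p) (blk q).
Proof. by rewrite !mxE; case: ifP; rewrite mulrC // mulNr. Qed.

Lemma symmetric_entry (R : nzRingType) n (A : 'M[R]_n) i j :
  is_symmetric A -> A i j = A j i.
Proof. by move=> symA; rewrite -[in LHS]symA mxE. Qed.

Lemma half_comb_symmetric (R : fieldType) n (S C : 'M[R]_n) g :
  is_symmetric S -> is_symmetric C -> is_symmetric (2^-1 *: (S + g *: C)).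
Proof.
by move=> symS symC; rewrite /is_symmetric !linearZ linearD /= linearZ /= symS symC.
Qed.

Lemma blockM_symmetric (R : fieldType) n (S C : 'M[R]_n) g :
  is_symmetric S -> is_symmetric C -> is_symmetric (blockM S C g).
Proof.
move=> symS symC; apply/matrixP => p q.
by rewrite mxE !blockME eq_sym symmetric_entry //; apply: half_comb_symmetric.
Qed.

Lemma addr_dominated_ge0 (R : realDomainType) (s c g : R) :
  `|c| <= s -> `|g| <= 1 -> 0 <= s + g * c.
Proof.
move=> cs g1; have /ler_normlP[gc_ge _] : `|g * c| <= s.
  by rewrite normrM; apply: le_trans cs; apply: ler_piMl.
by rewrite -lerBlDr sub0r.
Qed.

Lemma half_comb_nonneg (R : realFieldType) n (S C : 'M[R]_n) g :
  (forall i j, `|C i j| <= S i j) -> `|g| <= 1 -> nonnegmx (2^-1 *: (S + g *: C)).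
Proof.
move=> CS g1 i j; rewrite !mxE mulr_ge0 ?invr_ge0 ?ler0n //.
exact: addr_dominated_ge0.
Qed.

Lemma blockM_nonneg (R : realFieldType) n (S C : 'M[R]_n) g :
  (forall i j, `|C i j| <= S i j) -> `|g| <= 1 -> nonnegmx (blockM S C g).
Proof.
move=> CS g1 p q; rewrite blockME.
by case: ifP => _; apply: half_comb_nonneg; rewrite ?normrN.
Qed.

Lemma blockM_realizes (R : fieldType) n (S C : 'M[R]_n) g lam mu :
  (2 : R) != 0 -> realizes S lam -> realizes C mu ->
  realizes (blockM S C g) (lam ++ [seq g * x | x <- mu]).
Proof.
move=> two_neq0 cpS cpC.
by rewrite /realizes blockM_char_poly // cpS (char_poly_scale _ cpC) big_cat big_map.
Qed.

Theorem corollary1 (R : realType) (n : nat) (S C : 'M[R]_n)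
    (lam mu : seq R) (gamma : R) :
  is_symmetric S -> is_symmetric C ->
  size lam = n -> size mu = n ->
  realizes S lam -> realizes C mu ->
  0 <= gamma <= 1 ->
  (forall i j, `|C i j| <= S i j) ->
  [/\ is_symmetric (2^-1 *: (S + gamma *: C)) /\ nonnegmx (2^-1 *: (S + gamma *: C)),
      is_symmetric (2^-1 *: (S - gamma *: C)) /\ nonnegmx (2^-1 *: (S - gamma *: C)),
      [/\ is_symmetric (blockM S C gamma), nonnegmx (blockM S C gamma) &
          realizes (blockM S C gamma) (lam ++ [seq gamma * x | x <- mu])] &
      [/\ is_symmetric (blockM S C (- gamma)), nonnegmx (blockM S C (- gamma)) &
          realizes (blockM S C (- gamma)) (lam ++ [seq - gamma * x | x <- mu])]].
Proof.
(* The size hypotheses are implied by [realizes]. *)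
move=> symS symC _ _ cpS cpC /andP[gamma_ge0 gamma_le1] CS.
have gamma_norm : `|gamma| <= 1 by rewrite ger0_norm.
have Ngamma_norm : `|- gamma| <= 1 by rewrite normrN.
have two_neq0 : (2 : R) != 0 by rewrite pnatr_eq0.
rewrite -scaleNr; split; split;
  by [ apply: half_comb_symmetric | apply: half_comb_nonneg
     | apply: blockM_symmetric | apply: blockM_nonneg | apply: blockM_realizes ].
Qed.
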